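(* Let $T$ be a rooted binary tree with $n\ge 2$ leaves, let $T=(T_a,T_b)$ be its standard decomposition with $n_a\ge n_b$ leaves respectively, and let $k=\lceil\log_2 n\rceil$. Then $T$ has minimal Sackin index among trees with $n$ leaves if and only if $T_a$ and $T_b$ have minimal Sackin index among trees with $n_a$ and $n_b$ leaves respectively and $n_a-n_b\le\min\{n-2^{k-1},\,2^k-n\}$.
   Context: A rooted binary tree is either a single vertex (both root and leaf), or a finite tree with a distinguished root of degree 2 whose other non-leaf vertices have degree 3. The standard decomposition $T=(T_a,T_b)$ lists the subtrees rooted at the two children of the root. The Sackin index is $\mathcal S(T)=\sum_{x\text{ leaf}}\delta_x$, with $\delta_x$ the number of edges from the root to $x$. *)

From mathcomp Require Import all_boot.
Set Implicit Arguments. Unset Strict Implicit. Unset Printing Implicit Defensive.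

(* Rooted binary trees (ordered; the Sackin index and leaf count are
   invariant under swapping children). Node a b has standard decomposition (a,b). *)
Inductive bintree : Type :=
| Leaf : bintree
| Node : bintree -> bintree -> bintree.

Fixpoint leaves (t : bintree) : nat :=
  match t with
  | Leaf => 1
  | Node a b => leaves a + leaves b
  end.

Fixpoint leaf_depths (t : bintree) : seq nat :=
  match t with
  | Leaf => [:: 0]
  | Node a b => map S (leaf_depths a ++ leaf_depths b)
  end.

Definition sackin (t : bintree) : nat := sumn (leaf_depths t).

Definition sackin_minimal (t : bintree) : Prop :=
  forall t' : bintree, leaves t' = leaves t -> sackin t <= sackin t'.

From mathcomp Require Import all_boot.
From mathcomp Require Import zify.

Set Implicit Arguments.
Unset Strict Implicit.
Unset Printing Implicit Defensive.

(* The minimal Sackin index of a tree with n leaves is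
   F(n) = n - 1 + sum_(i <= n) ceil(log2 i), whose increments
   F(n+1) - F(n) = ceil(log2 (n+1)) + 1 are nondecreasing.  As
   S(T_a, T_b) = S(T_a) + S(T_b) + n, the tree T is minimal iff T_a and T_b are
   minimal and F(n_a) + F(n_b) + n = F(n).  The balanced split attains F(n), and
   moving one leaf from the larger subtree to the smaller one lowers
   F(n_a) + F(n_b) by ceil(log2 n_a) - ceil(log2 (n_b + 1)) >= 0; so the
   equality holds iff ceil(log2 n_a) <= ceil(log2 (n_b + 1)), which is the
   paper's bound on n_a - n_b in disguise. *)

Lemma size_leaf_depths t : size (leaf_depths t) = leaves t.
Proof. by elim: t => //= a IHa b IHb; rewrite size_map size_cat IHa IHb. Qed.

Lemma sumn_map_succ s : sumn (map S s) = sumn s + size s.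
Proof. by elim: s => //= x s ->; rewrite addnS addSn addnA. Qed.

Lemma sackin_Node a b :
  sackin (Node a b) = sackin a + sackin b + (leaves a + leaves b).
Proof.
by rewrite /sackin /= sumn_map_succ sumn_cat size_cat !size_leaf_depths.
Qed.

Lemma leaves_gt0 t : 0 < leaves t.
Proof. by elim: t => //= a Ha b Hb; rewrite addn_gt0 Ha. Qed.

Definition min_sackin (n : nat) : nat := n.-1 + \sum_(i < n) up_log 2 i.+1.

Lemma min_sackinS n : 0 < n -> min_sackin n.+1 = min_sackin n + (up_log 2 n.+1).+1.
Proof. by rewrite /min_sackin big_ord_recr /=; case: n => // n _; lia. Qed.

Lemma min_sackin_halves m : 0 < m ->
  min_sackin m.*2 = min_sackin m + min_sackin m + m.*2 /\
  min_sackin m.*2.+1 = min_sackin m.+1 + min_sackin m + m.*2.+1.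
Proof.
elim: m => // m IH _; have [-> | m_gt0] := posnP m.
  by rewrite /min_sackin !big_ord_recr big_ord0.
have [IHeven IHodd] := IH m_gt0.
have ul_even : up_log 2 m.+1.*2 = (up_log 2 m.+1).+1 by rewrite up_log2_double.
have ul_odd : up_log 2 m.+1.*2.+1 = (up_log 2 m.+2).+1.
  by rewrite up_log2S ?double_gt0 // doubleK.
have F_even : min_sackin m.+1.*2 = min_sackin m.*2.+1 + (up_log 2 m.+1.*2).+1.
  by rewrite doubleS min_sackinS.
have F_odd : min_sackin m.+1.*2.+1 = min_sackin m.+1.*2 + (up_log 2 m.+1.*2.+1).+1.
  by rewrite min_sackinS // doubleS.
rewrite F_odd F_even ul_even ul_odd IHodd !min_sackinS // !doubleS; lia.
Qed.

Lemma min_sackin_shift x y : 0 < y -> y <= x ->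
  min_sackin x.+1 + min_sackin y
  = min_sackin x + min_sackin y.+1 + (up_log 2 x.+1 - up_log 2 y.+1).
Proof.
move=> y_gt0 yx; have := @leq_up_log 2 _ _ (yx : y.+1 <= x.+1).
rewrite !min_sackinS ?(leq_trans y_gt0) //; lia.
Qed.

Lemma min_sackin_add x y : 0 < y -> y <= x ->
  min_sackin (x + y) <= min_sackin x + min_sackin y + (x + y)
    ?= iff (up_log 2 x <= up_log 2 y.+1).
Proof.
move=> y_gt0 yx; rewrite -(subnKC yx); move: (x - y) => d {x yx}.
elim/ltn_ind: d y y_gt0 => -[|[|d]] IH y y_gt0.
- rewrite addn0 leq_up_log // addnn (proj1 (min_sackin_halves y_gt0)).
  exact/leqif_refl.
- rewrite addn1 leqnn addSn addnn (proj2 (min_sackin_halves y_gt0)).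
  exact/leqif_refl.
set x := y + d.+1.
have shift := min_sackin_shift y_gt0 (leq_addr d.+1 y : y <= x).
have := IH d (ltnW (ltnSn _)) y.+1 isT.
have [-> ->] : y.+1 + d = x /\ x + y.+1 = x.+1 + y by split; lia.
rewrite (_ : y + d.+2 = x.+1); last by rewrite /x addnS.
have ul_mono := @leq_up_log 2.
have sub_cond : up_log 2 x.+1 <= up_log 2 y.+1 -> up_log 2 x <= up_log 2 y.+2.
  move=> le_ul; apply: leq_trans (ul_mono _ _ (leqnSn _)) (leq_trans le_ul _).
  exact: ul_mono.
move=> IHd; rewrite -[min_sackin _]addn0 shift addnAC -(andb_idl sub_cond).
by apply: leqif_add IHd _; rewrite -subn_eq0 -leqn0; apply: leqif_geq.
Qed.

Lemma min_sackin1 : min_sackin 1 = 0.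
Proof. by rewrite /min_sackin big_ord1. Qed.

Lemma min_sackin_leq_sackin t : min_sackin (leaves t) <= sackin t.
Proof.
elim: t => [|a IHa b IHb]; first by rewrite min_sackin1.
rewrite sackin_Node /=.
wlog ba : a b IHa IHb / leaves b <= leaves a.
  move=> wlog_ba; have [|/ltnW] := leqP (leaves b) (leaves a); first exact: wlog_ba.
  by rewrite addnC (addnC (sackin a)); exact: wlog_ba.
apply: leq_trans (min_sackin_add (leaves_gt0 b) ba) _.
by rewrite leq_add2r leq_add.
Qed.

Lemma min_sackin_attained n : 0 < n -> exists2 t, leaves t = n & sackin t = min_sackin n.
Proof.
elim/ltn_ind: n => n IH n_gt0; have [n_le1 | n_gt1] := leqP n 1.
  by rewrite (_ : n = 1); [exists Leaf; rewrite ?min_sackin1 | lia].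
have := odd_double_half n; rewrite -addnn; set y := n./2 => n_eq.
have y_gt0 : 0 < y by lia.
have yx : y <= n - y by lia.
have [ta la sa] := IH (n - y) (ltac:(lia)) (ltac:(lia)).
have [tb lb sb] := IH y (ltac:(lia)) y_gt0.
have n_split : n - y + y = n by lia.
exists (Node ta tb); first by rewrite /= la lb.
rewrite sackin_Node la lb sa sb -(eqTleqif (min_sackin_add y_gt0 yx)) ?n_split //.
by apply: leq_up_log; lia.
Qed.

Lemma sackin_minimalE t : sackin_minimal t <-> sackin t = min_sackin (leaves t).
Proof.
rewrite /sackin_minimal; split=> [t_min | ->].
  have [t' lt' st'] := min_sackin_attained (leaves_gt0 t).
  by apply/eqP; rewrite eqn_leq min_sackin_leq_sackin -st' t_min.
by move=> t' <-; apply: min_sackin_leq_sackin.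
Qed.

Lemma up_log_leq_pow2 m p : (up_log 2 m <= p) = (m <= 2 ^ p).
Proof.
apply/idP/idP => [le_ul | /up_log_min -> //].
by apply: leq_trans (@up_logP 2 m isT) _; rewrite leq_exp2l.
Qed.

Lemma up_log_split_cond x y : 0 < y -> y <= x ->
  (up_log 2 x <= up_log 2 y.+1) =
  (x - y <= minn (x + y - 2 ^ (up_log 2 (x + y)).-1) (2 ^ up_log 2 (x + y) - (x + y))).
Proof.
move=> y_gt0 yx; rewrite up_log_leq_pow2.
set p := up_log 2 y.+1; set n := x + y; set k := up_log 2 n.
have p_gt0 : 0 < p by rewrite up_log_gt0.
have k_gt0 : 0 < k by rewrite up_log_gt0 /n; lia.
have /andP[y_lo y_hi] := up_log_bounds (isT : 1 < 2) (y_gt0 : 1 < y.+1).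
have /andP[n_lo n_hi] := up_log_bounds (isT : 1 < 2) (ltac:(lia) : 1 < n).
have n_eq : n = x + y by [].
rewrite -/p -/k in y_lo y_hi n_lo n_hi *; clearbody p n k.
have p_le_k : p <= k by rewrite -(@leq_exp2l 2) // -(prednK p_gt0) expnS; lia.
case: p p_gt0 p_le_k y_lo y_hi => [//|p'] _ p_le_k.
case: k k_gt0 p_le_k n_lo n_hi => [//|k'] _ k_ge_p.
rewrite /= !expnS => n_lo n_hi y_lo y_hi.
have [k_eq|k_gt_p] := eqVneq k' p'; first by subst k'; apply/idP/idP; lia.
have [k_eq|k_gt_p1] := eqVneq k' p'.+1.
  by subst k'; rewrite expnS in n_lo n_hi *; apply/idP/idP; lia.
have : 2 ^ p'.+2 <= 2 ^ k' by rewrite leq_exp2l //; lia.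
rewrite !expnS => big_k; apply/idP/idP; lia.
Qed.

Theorem mainTheorem15 (a b : bintree) :
  leaves b <= leaves a ->
  let n := leaves (Node a b) in
  let k := up_log 2 n in
  (sackin_minimal (Node a b) <->
   [/\ sackin_minimal a, sackin_minimal b &
       leaves a - leaves b <= minn (n - 2 ^ k.-1) (2 ^ k - n)]).
Proof.
move=> ba n k; rewrite /n /k /= -up_log_split_cond ?leaves_gt0 //.
rewrite sackin_minimalE /=.
have node_bound : min_sackin (leaves a + leaves b) <= sackin (Node a b)
    ?= iff (up_log 2 (leaves a) <= up_log 2 (leaves b).+1) &&
           ((min_sackin (leaves a) == sackin a) && (min_sackin (leaves b) == sackin b)).
  rewrite sackin_Node; apply: leqif_trans (min_sackin_add (leaves_gt0 b) ba) _.
  rewrite (mono_leqif (leq_add2r _)).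
  exact: leqif_add (leqif_eq (min_sackin_leq_sackin a)) (leqif_eq (min_sackin_leq_sackin b)).
split=> [node_min | [/sackin_minimalE ea /sackin_minimalE eb cond]].
  have := eq_leqif node_bound; rewrite node_min eqxx => /esym/and3P[cond /eqP ea /eqP eb].
  by split; rewrite // sackin_minimalE.
by apply/esym/eqP; rewrite (eq_leqif node_bound) cond ea eb !eqxx.
Qed.
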